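(* Let $(\Sigma,w)$ be a doubly weighted signed graph and $v_0\in V(\Sigma)$, and let $(\Sigma^{v_0},w^{v_0})$ be obtained by switching at $v_0$. Then $X_{(\Sigma,w)}=X_{(\Sigma^{v_0},w^{v_0})}$.
   Context: A signed graph $\Sigma$ is a finite graph (loops and multiple edges allowed) together with $\mathrm{sgn}:E(\Sigma)\to\{+,-\}$; write $e:uv$ if $e$ has endpoints $u,v$. A coloring $\kappa:V(\Sigma)\to\mathbb{Z}$ is proper if $\kappa(u)\ne\mathrm{sgn}(e)\kappa(v)$ for every edge $e:uv$. A double weight is a pair $w=(w_+,w_-)$ of functions $V(\Sigma)\to\mathbb{N}=\{0,1,2,\dots\}$, and $X_{(\Sigma,w)}=\sum_{\kappa\text{ proper}}\prod_{v\in V(\Sigma)}x_{\kappa(v)}^{w_+(v)}x_{-\kappa(v)}^{w_-(v)}$ in commuting variables $x_i$, $i\in\mathbb{Z}$. Switching at $v_0$: $w^{v_0}$ agrees with $w$ except that if $w(v_0)=(a,b)$ then $w^{v_0}(v_0)=(b,a)$; $\Sigma^{v_0}$ is $\Sigma$ with the sign of every non-loop edge incident to $v_0$ reversed (all other edges, including loops, unchanged). *)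

From HB Require Import structures.
From mathcomp Require Import all_boot all_order all_algebra.
From mathcomp Require Import boolp classical_sets cardinality.
Set Implicit Arguments. Unset Strict Implicit. Unset Printing Implicit Defensive.
Import Order.TTheory GRing.Theory Num.Theory.
Local Open Scope ring_scope.

(* A signed graph: finite vertex type V, finite edge type E (multiple edges
   allowed), an endpoint map (loops = edges with equal endpoints), and a sign
   (true = +, false = -). *)
Record signed_graph (V : finType) := SignedGraph {
  sg_edge : finType;
  sg_ends : sg_edge -> V * V;
  sg_sgn  : sg_edge -> bool }.
Arguments sg_edge {V} s.
Arguments sg_ends {V} s _.
Arguments sg_sgn {V} s _.

Record dweight (V : finType) := DWeight { w_plus : V -> nat; w_minus : V -> nat }.
Arguments w_plus {V} d _.
Arguments w_minus {V} d _.

Definition sgn_act (b : bool) (z : int) : int := if b then z else - z.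

Definition proper (V : finType) (S : signed_graph V) (kappa : V -> int) : Prop :=
  forall e : sg_edge S,
    kappa (sg_ends S e).1 != sgn_act (sg_sgn S e) (kappa (sg_ends S e).2).

(* The monomial prod_v x_{kappa v}^{w_+ v} x_{-kappa v}^{w_- v}, represented by
   its exponent vector i |-> exponent of x_i (variables commute). *)
Definition monomial (V : finType) (w : dweight V) (kappa : V -> int) : int -> nat :=
  fun i => (\sum_(v : V) (w_plus w v * (kappa v == i)
                          + w_minus w v * (- kappa v == i)))%N.

(* The proper colorings contributing the monomial m to X_(S,w); the coefficient
   of m in X_(S,w) is the (possibly infinite) cardinality of this set. *)
Definition X_terms (V : finType) (S : signed_graph V) (w : dweight V)
    (m : int -> nat) : set (V -> int) :=
  [set kappa | proper S kappa /\ monomial w kappa = m].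

Definition X_eq (V : finType) (S1 S2 : signed_graph V) (w1 w2 : dweight V) : Prop :=
  forall m : int -> nat, card_eq (X_terms S1 w1 m) (X_terms S2 w2 m).

Definition switch_weight (V : finType) (w : dweight V) (v0 : V) : dweight V :=
  DWeight (fun v => if v == v0 then w_minus w v else w_plus w v)
          (fun v => if v == v0 then w_plus w v else w_minus w v).

Definition switch_graph (V : finType) (S : signed_graph V) (v0 : V) : signed_graph V :=
  @SignedGraph V (sg_edge S) (sg_ends S)
    (fun e => let u := (sg_ends S e).1 in let v := (sg_ends S e).2 in
       if (u != v) && ((u == v0) || (v == v0)) then ~~ sg_sgn S e else sg_sgn S e).

From mathcomp Require Import all_boot all_order all_algebra.
From mathcomp Require Import boolp classical_sets cardinality.
Import GRing.Theory.
Set Implicit Arguments. Unset Strict Implicit.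
Local Open Scope ring_scope.

(* Negating the colour at [v0] is an involution on colourings.  It turns proper
   colourings of [S] into proper colourings of the switched graph: a non-loop
   edge at [v0] changes sign together with the colour of exactly one endpoint,
   while a loop at [v0] keeps its sign and has both endpoints negated.  It also
   swaps the roles of [w_+ v0] and [w_- v0] in the monomial, so it matches the
   terms of the two series monomial by monomial. *)

Lemma sgn_actN (b : bool) (z : int) : sgn_act b (- z) = - sgn_act b z.
Proof. by case: b. Qed.

Lemma sgn_act_negb (b : bool) (z : int) : sgn_act (~~ b) z = - sgn_act b z.
Proof. by case: b; rewrite /= ?opprK. Qed.

Section SwitchColoring.

Variables (V : finType) (v0 : V).

Definition switch_coloring (kappa : V -> int) : V -> int :=
  fun v => if v == v0 then - kappa v else kappa v.

Lemma switch_coloringK : involutive switch_coloring.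
Proof.
by move=> kappa; apply: funext => v; rewrite /switch_coloring; case: (v == v0); rewrite ?opprK.
Qed.

Lemma proper_switch (S : signed_graph V) (kappa : V -> int) :
  proper (switch_graph S v0) (switch_coloring kappa) <-> proper S kappa.
Proof.
suff edgeE e : (switch_coloring kappa (sg_ends S e).1
                 != sgn_act (sg_sgn (switch_graph S v0) e)
                      (switch_coloring kappa (sg_ends S e).2))
             = (kappa (sg_ends S e).1 != sgn_act (sg_sgn S e) (kappa (sg_ends S e).2)).
  by split=> kappaP e; [rewrite -edgeE | rewrite edgeE]; exact: kappaP.
rewrite /= /switch_coloring; case: (sg_ends S e) => u v /=.
have [<-|neq_uv] := eqVneq u v; first by case: ifP; rewrite ?sgn_actN ?eqr_opp.
have [eq_uv0|_] := eqVneq u v0.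
  by rewrite -eq_uv0 (eq_sym v) (negbTE neq_uv) /= sgn_act_negb eqr_opp.
by have [->|//] := eqVneq v v0; rewrite sgn_act_negb sgn_actN opprK.
Qed.

Lemma monomial_switch (w : dweight V) (kappa : V -> int) :
  monomial (switch_weight w v0) (switch_coloring kappa) = monomial w kappa.
Proof.
apply: funext => i; apply: eq_bigr => v _ /=.
by rewrite /switch_coloring; case: (v == v0); rewrite // opprK addnC.
Qed.

End SwitchColoring.

Local Open Scope classical_set_scope.

Lemma involutive_preimage (T : Type) (f : T -> T) (A : set T) :
  involutive f -> f @^-1` A = f @` A.
Proof.
move=> fK; apply/seteqP; split=> [x Afx | _ [x Ax <-]]; last by rewrite /preimage /= fK.
by exists (f x); rewrite ?fK.
Qed.

Lemma X_terms_switch (V : finType) (S : signed_graph V) (w : dweight V) (v0 : V)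
    (m : int -> nat) :
  X_terms (switch_graph S v0) (switch_weight w v0) m
  = switch_coloring v0 @^-1` X_terms S w m.
Proof.
apply/funext => kappa; rewrite /X_terms /preimage /= -{1 2}(switch_coloringK v0 kappa).
by rewrite monomial_switch (propext (proper_switch _ _ _)).
Qed.

Theorem lemma4p2 (V : finType) (S : signed_graph V) (w : dweight V) (v0 : V) :
  X_eq S (switch_graph S v0) w (switch_weight w v0).
Proof.
move=> m; rewrite X_terms_switch involutive_preimage; last exact: switch_coloringK.
by apply/card_esym/inj_card_eq; exact: in2W (inv_inj (switch_coloringK v0)).
Qed.
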